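(* There exists a diameter-perfect code of minimum distance $2r$ in $(\mathbb Z^m,d_a)$ in each of the following cases: (i) $m\in\{1,2\}$ and $r\ge1$ arbitrary; (ii) $m\ge3$ and $r=1$.
   Context: $d_a(\mathbf x,\mathbf y)=\max\{\sum_{i:x_i>y_i}(x_i-y_i),\sum_{i:x_i<y_i}(y_i-x_i)\}$ on $\mathbb Z^m$; the minimum distance $d_a(\mathcal C)$ of a code is the minimum distance between distinct codewords. An anticode of diameter $D$ is a subset of $\mathbb Z^m$ whose points are pairwise at $d_a$-distance at most $D$. The density of $\mathcal C$ is $\mu(\mathcal C)=\lim_{k\to\infty}|\mathcal C\cap\{-k,\dots,k\}^m|/(2k+1)^m$. A code $\mathcal C$ with minimum distance $d$ is diameter-perfect if its density exists and there is a finite anticode $S$ of diameter $d-1$ with $\mu(\mathcal C)\cdot|S|=1$. *)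

From Stdlib Require Import Reals ZArith List Classical ClassicalEpsilon.
Import ListNotations.
Open Scope Z_scope.

Definition point (m : nat) (x : list Z) : Prop := length x = m.

Fixpoint pos_sum (x y : list Z) : Z :=
  match x, y with
  | a :: x', b :: y' => Z.max (a - b) 0 + pos_sum x' y'
  | _, _ => 0
  end.

(* Asymmetric (l_1-type) distance d_a(x,y) = max{ sum_{x_i>y_i}(x_i-y_i),
   sum_{x_i<y_i}(y_i-x_i) }. *)
Definition da (x y : list Z) : Z := Z.max (pos_sum x y) (pos_sum y x).

Definition is_code (m : nat) (C : list Z -> Prop) : Prop :=
  forall x, C x -> point m x.

Definition min_dist (C : list Z -> Prop) (d : Z) : Prop :=
  (exists x y, C x /\ C y /\ x <> y /\ da x y = d) /\
  (forall x y, C x -> C y -> x <> y -> d <= da x y).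

Definition finite_anticode (m : nat) (S : list (list Z)) (D : Z) : Prop :=
  NoDup S /\ (forall x, In x S -> point m x) /\
  (forall x y, In x S -> In y S -> da x y <= D).

Definition interval (k : nat) : list Z :=
  map (fun i => Z.of_nat i - Z.of_nat k) (seq 0 (2 * k + 1)).

Fixpoint box (m k : nat) : list (list Z) :=
  match m with
  | O => [ [] ]
  | S m' => flat_map (fun z => map (cons z) (box m' k)) (interval k)
  end.

Definition count_in_box (m : nat) (C : list Z -> Prop) (k : nat) : nat :=
  length (filter (fun x => if excluded_middle_informative (C x) then true else false)
                 (box m k)).

Definition has_density (m : nat) (C : list Z -> Prop) (mu : R) : Prop :=
  Un_cv (fun k => (INR (count_in_box m C k) / INR ((2 * k + 1) ^ m))%R) mu.

Definition diameter_perfect (m : nat) (C : list Z -> Prop) (d : Z) : Prop :=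
  is_code m C /\ min_dist C d /\
  exists mu : R, has_density m C mu /\
    exists S, finite_anticode m S (d - 1) /\ (mu * INR (length S) = 1)%R.

From Stdlib Require Import Reals ZArith List Lia Lra ClassicalEpsilon.
Import ListNotations.
Open Scope Z_scope.

(* All three codes are obtained by congruence lifts: from a code T in Z^m take the points
   z :: t of Z^(m+1) with t in T and z = f t (mod N). Over each t, the interval
   {-k, ..., k} holds (2k+1)/N +- 1 admissible z, so lifting divides the density by N.
   For m = 1 this gives 2rZ, with the anticode {0, ..., 2r-1}. For m = 2 it gives the
   lattice {x_2 in rZ, x_1 + 2 x_2 in 3rZ} of density 1/(3r^2): since A + 2B = 0 (mod 3)
   excludes the nonzero vectors with max(|A|, |B|, |A+B|) <= 1, its nonzero vectors have
   d_a-norm at least 2r, and a hexagon of 3r^2 points is an anticode of diameter 2r-1.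
   For r = 1 it gives {x | x_1 + 2 x_2 + ... + m x_m = 0 (mod m+1)}, of density 1/(m+1),
   against the anticode {0, e_1, ..., e_m}: two points at distance 1 differ by +-e_i or
   e_i - e_j, which changes the weighted sum by a nonzero amount of size at most m. *)

Fixpoint nsum {A} (l : list A) (g : A -> nat) : nat :=
  match l with [] => 0%nat | a :: l' => (g a + nsum l' g)%nat end.

Lemma nsum_app {A} (l1 l2 : list A) g : nsum (l1 ++ l2) g = (nsum l1 g + nsum l2 g)%nat.
Proof. induction l1; simpl; lia. Qed.

Lemma nsum_ext {A} (l : list A) g h : (forall a, g a = h a) -> nsum l g = nsum l h.
Proof. intros H; induction l; simpl; auto. Qed.

Lemma nsum_add {A} (l : list A) g h :
  nsum l (fun a => g a + h a)%nat = (nsum l g + nsum l h)%nat.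
Proof. induction l; simpl; lia. Qed.

Lemma nsum_mul_l {A} (l : list A) c g : nsum l (fun a => c * g a)%nat = (c * nsum l g)%nat.
Proof. induction l; simpl; lia. Qed.

Lemma nsum_swap {A B} (l1 : list A) (l2 : list B) g :
  nsum l1 (fun a => nsum l2 (g a)) = nsum l2 (fun b => nsum l1 (fun a => g a b)).
Proof.
  induction l1; simpl.
  - induction l2; simpl; auto.
  - rewrite IHl1, <- nsum_add. reflexivity.
Qed.

Lemma nsum_flat_map_cons (I : list Z) (L : list (list Z)) g :
  nsum (flat_map (fun z => map (cons z) L) I) g = nsum I (fun z => nsum L (fun t => g (z :: t))).
Proof.
  induction I; simpl; auto. rewrite nsum_app, IHI. f_equal.
  clear IHI. induction L; simpl; auto.
Qed.

Lemma nsum_le_length {A} (l : list A) g :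
  (forall a, (g a <= 1)%nat) -> (nsum l g <= length l)%nat.
Proof. intros H; induction l; simpl; auto. specialize (H a); lia. Qed.

Definition indicator (P : list Z -> Prop) (x : list Z) : nat :=
  if excluded_middle_informative (P x) then 1%nat else 0%nat.

Lemma count_in_box_nsum m C k : count_in_box m C k = nsum (box m k) (indicator C).
Proof.
  unfold count_in_box. induction (box m k); simpl; auto.
  unfold indicator at 1. destruct excluded_middle_informative; simpl; lia.
Qed.

Lemma length_box m k : length (box m k) = ((2 * k + 1) ^ m)%nat.
Proof.
  induction m; simpl; auto.
  rewrite (flat_map_constant_length (c := length (box m k))).
  - unfold interval. rewrite length_map, length_seq, IHm. reflexivity.
  - intros; rewrite length_map; auto.
Qed.

Lemma count_in_box_le m C k : (count_in_box m C k <= (2 * k + 1) ^ m)%nat.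
Proof.
  rewrite count_in_box_nsum, <- length_box. apply nsum_le_length.
  intros; unfold indicator. destruct excluded_middle_informative; lia.
Qed.

Definition dvd_indicator (N u : Z) : nat := if u mod N =? 0 then 1%nat else 0%nat.

Lemma div_sub_div_pred N v : 0 < N -> v / N - (v - 1) / N = Z.of_nat (dvd_indicator N v).
Proof.
  intros HN. unfold dvd_indicator.
  pose proof (Z.div_mod v N ltac:(lia)). pose proof (Z.div_mod (v - 1) N ltac:(lia)).
  pose proof (Z.mod_pos_bound v N HN). pose proof (Z.mod_pos_bound (v - 1) N HN).
  assert (Hq : v / N - (v - 1) / N = 0 \/ v / N - (v - 1) / N = 1) by nia.
  destruct (Z.eqb_spec (v mod N) 0); simpl; nia.
Qed.

Lemma nsum_dvd_indicator_seq N s c n : 0 < N ->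
  Z.of_nat (nsum (map (fun i => Z.of_nat i - s) (seq 0 n)) (fun z => dvd_indicator N (z - c)))
  = (Z.of_nat n - s - c - 1) / N - (- s - c - 1) / N.
Proof.
  intros HN. induction n.
  - simpl. lia.
  - rewrite seq_S, map_app, nsum_app, Nat2Z.inj_add, IHn. cbn [map nsum].
    pose proof (div_sub_div_pred N (Z.of_nat n - s - c) HN).
    rewrite Nat.add_0_l, Nat.add_0_r, Nat2Z.inj_succ.
    replace (Z.succ (Z.of_nat n) - s - c - 1) with (Z.of_nat n - s - c) by lia. lia.
Qed.

Lemma interval_residue_count N c k : 0 < N ->
  Z.abs (N * Z.of_nat (nsum (interval k) (fun z => dvd_indicator N (z - c)))
         - Z.of_nat (2 * k + 1)) < N.
Proof.
  intros HN. unfold interval. rewrite nsum_dvd_indicator_seq by exact HN.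
  set (a := Z.of_nat (2 * k + 1) - Z.of_nat k - c - 1).
  set (b := - Z.of_nat k - c - 1).
  pose proof (Z.div_mod a N ltac:(lia)). pose proof (Z.div_mod b N ltac:(lia)).
  pose proof (Z.mod_pos_bound a N HN). pose proof (Z.mod_pos_bound b N HN).
  assert (a - b = Z.of_nat (2 * k + 1)) by (unfold a, b; lia).
  rewrite Z.mul_sub_distr_l. lia.
Qed.

Definition cong_lift (N : Z) (f : list Z -> Z) (T : list Z -> Prop) (x : list Z) : Prop :=
  match x with [] => False | z :: t => T t /\ (z - f t) mod N = 0 end.

Lemma is_code_cong_lift m N f T : is_code m T -> is_code (S m) (cong_lift N f T).
Proof.
  intros HT [|z t] Hx; [destruct Hx|]. destruct Hx as [Ht _].
  unfold point; simpl. rewrite (HT t Ht). reflexivity.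
Qed.

Lemma cong_lift_mod N f T z t : 0 < N -> cong_lift N f T (z :: t) ->
  T t /\ exists q, z = f t + q * N.
Proof.
  intros HN [Ht Hz]. split; [exact Ht|].
  apply Z.mod_divide in Hz as [q Hq]; [|lia]. exists q. lia.
Qed.

Lemma indicator_cong_lift N f T z t :
  indicator (cong_lift N f T) (z :: t) = (indicator T t * dvd_indicator N (z - f t))%nat.
Proof.
  unfold indicator, dvd_indicator; simpl.
  destruct (excluded_middle_informative (T t /\ (z - f t) mod N = 0));
  destruct (excluded_middle_informative (T t));
  destruct (Z.eqb_spec ((z - f t) mod N) 0); simpl; tauto || lia.
Qed.

Lemma nsum_mul_abs_bound {A} (l : list A) (a c : A -> nat) (N L : Z) :
  (forall x, Z.abs (N * Z.of_nat (c x) - L) <= N) ->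
  Z.abs (N * Z.of_nat (nsum l (fun x => a x * c x)%nat) - L * Z.of_nat (nsum l a))
  <= N * Z.of_nat (nsum l a).
Proof.
  intros Hc. induction l as [|x l IH]; simpl; [lia|].
  specialize (Hc x). rewrite !Nat2Z.inj_add, Nat2Z.inj_mul.
  assert (0 <= Z.of_nat (a x)) by lia.
  assert (Z.abs (Z.of_nat (a x) * (N * Z.of_nat (c x) - L)) <= Z.of_nat (a x) * N)
    by (rewrite Z.abs_mul, Z.abs_eq by lia; nia).
  lia.
Qed.

Lemma count_cong_lift m N f T k : 0 < N ->
  Z.abs (N * Z.of_nat (count_in_box (S m) (cong_lift N f T) k)
         - Z.of_nat (2 * k + 1) * Z.of_nat (count_in_box m T k))
  <= N * Z.of_nat (count_in_box m T k).
Proof.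
  intros HN. rewrite !count_in_box_nsum. cbn [box].
  rewrite nsum_flat_map_cons.
  erewrite nsum_ext by (intros z; apply nsum_ext; intros t; apply indicator_cong_lift).
  rewrite nsum_swap.
  erewrite nsum_ext by (intros t; apply nsum_mul_l).
  apply nsum_mul_abs_bound. intros t.
  pose proof (interval_residue_count N (f t) k HN). lia.
Qed.

Open Scope R_scope.

Lemma Un_cv_const c : Un_cv (fun _ => c) c.
Proof. intros eps He. exists 0%nat. intros k _. rewrite R_dist_eq. exact He. Qed.

Lemma Un_cv_close u v l :
  Un_cv u l -> (forall k, Rabs (v k - u k) <= / (INR k + 1)) -> Un_cv v l.
Proof.
  intros Hu Hvu eps He.
  destruct (Hu (eps / 2)) as [K1 HK1]; [lra|].
  destruct (@RinvN_cv (eps / 2) ltac:(lra)) as [K2 HK2].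
  exists (Nat.max K1 K2). intros k Hk.
  specialize (HK1 k ltac:(lia)). specialize (HK2 k ltac:(lia)). specialize (Hvu k).
  unfold R_dist, RinvN in *; simpl in HK2.
  rewrite Rminus_0_r, Rabs_right in HK2 by (apply Rle_ge, Rlt_le, RinvN_pos).
  pose proof (Rabs_triang (v k - u k) (u k - l)).
  replace (v k - u k + (u k - l)) with (v k - l) in * by ring. lra.
Qed.

Lemma density_ratio_close (c c' L D N : R) :
  0 < N -> 0 < L -> 0 < D -> 0 <= c <= D -> Rabs (N * c' - L * c) <= N * c ->
  Rabs (c' / (L * D) - c / D * / N) <= / L.
Proof.
  intros HN HL HD Hc Hdiff.
  replace (c' / (L * D) - c / D * / N) with ((N * c' - L * c) * / (N * L * D))
    by (field; lra).
  assert (HNLD : 0 < N * L * D) by (repeat apply Rmult_lt_0_compat; lra).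
  rewrite Rabs_mult, (Rabs_right (/ _)) by (apply Rle_ge, Rlt_le, Rinv_0_lt_compat, HNLD).
  apply (Rmult_le_reg_r (N * L * D)); [exact HNLD|].
  rewrite Rmult_assoc, Rinv_l by lra.
  replace (/ L * (N * L * D)) with (N * D) by (field; lra). nra.
Qed.

Lemma has_density_cong_lift m N f T nu : (0 < N)%Z ->
  has_density m T nu -> has_density (S m) (cong_lift N f T) (nu / IZR N).
Proof.
  intros HN HT. apply Un_cv_close with
    (fun k => INR (count_in_box m T k) / INR ((2 * k + 1) ^ m) * / IZR N).
  { apply CV_mult; [exact HT | apply Un_cv_const]. }
  intros k.
  pose proof (count_cong_lift m N f T k HN) as Hcount.
  pose proof (count_in_box_le m T k) as Hle.
  assert (HD : (0 < (2 * k + 1) ^ m)%nat) by (apply Nat.neq_0_lt_0, Nat.pow_nonzero; lia).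
  replace ((2 * k + 1) ^ S m)%nat with ((2 * k + 1) * (2 * k + 1) ^ m)%nat by reflexivity.
  rewrite mult_INR.
  apply Rle_trans with (/ INR (2 * k + 1)).
  - apply density_ratio_close.
    + apply IZR_lt; exact HN.
    + apply lt_0_INR; lia.
    + apply lt_0_INR; exact HD.
    + split; [apply pos_INR | apply le_INR; exact Hle].
    + apply IZR_le in Hcount. rewrite abs_IZR, minus_IZR, !mult_IZR, <- !INR_IZR_INZ in Hcount.
      exact Hcount.
  - apply Rinv_le_contravar; [rewrite <- S_INR; apply lt_0_INR; lia|].
    rewrite <- S_INR. apply le_INR. lia.
Qed.

Close Scope R_scope.

Fixpoint full (n : nat) : list Z -> Prop :=
  match n with
  | O => fun x => x = []
  | S n' => cong_lift 1 (fun _ => 0) (full n')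
  end.

Lemma full_iff n x : full n x <-> length x = n.
Proof.
  revert x; induction n as [|n IH]; intros [|z t]; simpl.
  - tauto.
  - split; discriminate.
  - split; [tauto | discriminate].
  - rewrite IH, Z.mod_1_r. lia.
Qed.

Lemma is_code_full n : is_code n (full n).
Proof. intros x Hx. apply full_iff, Hx. Qed.

Lemma has_density_full n : has_density n (full n) 1.
Proof.
  induction n as [|n IH].
  - intros eps He. exists 0%nat. intros k _.
    unfold count_in_box; simpl.
    destruct excluded_middle_informative as [_|Hnil]; [|contradiction Hnil; reflexivity].
    unfold R_dist. simpl. replace (1 / 1 - 1)%R with 0%R by field.
    rewrite Rabs_R0. exact He.
  - replace 1%R with (1 / IZR 1)%R by (simpl; field).
    apply has_density_cong_lift; [lia | exact IH].
Qed.

Definition multiples_code (N : Z) : list Z -> Prop := cong_lift N (fun _ => 0) (full 0).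

Lemma min_dist_multiples_code N : 0 < N -> min_dist (multiples_code N) N.
Proof.
  intros HN. split.
  - exists [N], [0]. split; [|split; [|split]].
    + split; [reflexivity|]. rewrite Z.sub_0_r. apply Z.mod_same. lia.
    + split; reflexivity.
    + intros E. injection E. lia.
    + unfold da; cbn [pos_sum]. lia.
  - intros [|z t] [|z' t'] Hx Hy Hxy; try contradiction.
    apply cong_lift_mod in Hx as [-> [q ->]], Hy as [-> [q' ->]]; try exact HN.
    assert (q <> q') by (intros <-; contradiction).
    unfold da; cbn [pos_sum].
    destruct (Z.lt_total q q') as [Hlt|[|Hlt]]; [|contradiction|]; nia.
Qed.

Definition segment (N : Z) : list (list Z) := map (fun i => [Z.of_nat i]) (seq 0 (Z.to_nat N)).

Lemma segment_anticode N : 0 < N -> finite_anticode 1 (segment N) (N - 1).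
Proof.
  intros HN. unfold segment. split; [|split].
  - apply NoDup_map_NoDup_ForallPairs; [|apply seq_NoDup].
    intros a b _ _ E. injection E. lia.
  - intros x Hx. apply in_map_iff in Hx as [i [<- _]]. reflexivity.
  - intros x y Hx Hy.
    apply in_map_iff in Hx as [i [<- Hi]], Hy as [j [<- Hj]]. apply in_seq in Hi, Hj.
    unfold da; cbn [pos_sum]. lia.
Qed.

Lemma diameter_perfect_multiples_code N : 0 < N ->
  diameter_perfect 1 (multiples_code N) N.
Proof.
  intros HN. split; [|split].
  - apply is_code_cong_lift, is_code_full.
  - apply min_dist_multiples_code, HN.
  - exists (1 / IZR N)%R. split.
    + apply has_density_cong_lift; [exact HN | apply has_density_full].
    + exists (segment N). split.
      * apply segment_anticode, HN.
      * unfold segment. rewrite length_map, length_seq, INR_IZR_INZ, Z2Nat.id by lia.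
        field. apply not_0_IZR. lia.
Qed.

Definition hex_code (r : Z) : list Z -> Prop :=
  cong_lift (3 * r) (fun t => -2 * hd 0 t) (multiples_code r).

Lemma da_pair_ge x1 x2 y1 y2 :
  Z.max (Z.abs (x1 - y1)) (Z.max (Z.abs (x2 - y2)) (Z.abs (x1 - y1 + (x2 - y2))))
  <= da [x1; x2] [y1; y2].
Proof. unfold da; cbn [pos_sum]. lia. Qed.

Lemma min_dist_hex_code r : 1 <= r -> min_dist (hex_code r) (2 * r).
Proof.
  intros Hr. split.
  - exists [r; r], [0; 0]. split; [|split; [|split]].
    + split; [split; [reflexivity|]|]; cbn [hd].
      * rewrite Z.sub_0_r. apply Z.mod_same. lia.
      * replace (r - -2 * r) with (3 * r) by ring. apply Z.mod_same. lia.
    + split; [split|]; reflexivity.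
    + intros E. injection E. lia.
    + unfold da; cbn [pos_sum]. lia.
  - intros [|x1 t] [|y1 t'] Hx Hy Hxy; try contradiction.
    apply cong_lift_mod in Hx as [Hx [q Hq]], Hy as [Hy [q' Hq']]; try lia.
    destruct t as [|x2 t]; [contradiction|]. destruct t' as [|y2 t']; [contradiction|].
    apply cong_lift_mod in Hx as [-> [p Hp]], Hy as [-> [p' Hp']]; try lia.
    cbn [hd] in *.
    set (B := p - p'). set (A := 3 * (q - q') - 2 * B).
    assert (Ev : x2 - y2 = r * B) by (unfold B; lia).
    assert (Eu : x1 - y1 = r * A) by (unfold A, B; lia).
    assert (HAB : A <> 0 \/ B <> 0).
    { destruct (Z.eq_dec A 0) as [HA|], (Z.eq_dec B 0) as [HB|]; auto.
      rewrite HA, Z.mul_0_r in Eu. rewrite HB, Z.mul_0_r in Ev.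
      exfalso. apply Hxy. f_equal; [|f_equal]; lia. }
    assert (Hlarge : 2 <= Z.abs A \/ 2 <= Z.abs B \/ 2 <= Z.abs (A + B))
      by (unfold A in *; lia).
    pose proof (da_pair_ge x1 x2 y1 y2) as Hda.
    rewrite Eu, Ev, <- Z.mul_add_distr_l, !Z.abs_mul, (Z.abs_eq r) in Hda by lia.
    destruct Hlarge as [H|[H|H]]; nia.
Qed.

Lemma NoDup_list_prod {A B} (l1 : list A) (l2 : list B) :
  NoDup l1 -> NoDup l2 -> NoDup (list_prod l1 l2).
Proof.
  intros H1 H2. induction H1 as [|a l1 Ha H1 IH]; simpl; [constructor|].
  apply NoDup_app; [| exact IH |].
  - apply NoDup_map_NoDup_ForallPairs; [|exact H2]. intros b b' _ _ E. injection E; auto.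
  - intros [a' b] Hin Hin'. apply in_map_iff in Hin as [b' [E _]]. injection E as <- <-.
    apply in_prod_iff in Hin' as [Hin' _]. contradiction.
Qed.

(* Row by row, the hexagon {0 <= p1, p2 <= 2r - 1, r - 1 <= p1 + p2 <= 3r - 2}: the rows
   p1 = i and p1 = r + i (i < r) hold r + 1 + i and 2r - 1 - i points, and j < 3r
   runs through both. *)
Definition hex_point (r : Z) (i j : nat) : list Z :=
  let a := Z.of_nat i in let b := Z.of_nat j in
  if b <? r + 1 + a then [a; r - 1 - a + b] else [r + a; b - (r + 1 + a)].

Lemma hex_point_spec r i j : (i < Z.to_nat r)%nat -> (j < Z.to_nat (3 * r))%nat ->
  exists p1 p2, hex_point r i j = [p1; p2] /\ 0 <= p1 <= 2 * r - 1 /\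
    0 <= p2 <= 2 * r - 1 /\ r - 1 <= p1 + p2 <= 3 * r - 2.
Proof.
  intros Hi Hj. unfold hex_point.
  destruct (Z.ltb_spec (Z.of_nat j) (r + 1 + Z.of_nat i));
    do 2 eexists; (split; [reflexivity | lia]).
Qed.

Definition hexagon (r : Z) : list (list Z) :=
  map (fun p => hex_point r (fst p) (snd p))
      (list_prod (seq 0 (Z.to_nat r)) (seq 0 (Z.to_nat (3 * r)))).

Lemma in_hexagon r x : In x (hexagon r) ->
  exists p1 p2, x = [p1; p2] /\ 0 <= p1 <= 2 * r - 1 /\
    0 <= p2 <= 2 * r - 1 /\ r - 1 <= p1 + p2 <= 3 * r - 2.
Proof.
  intros Hx. apply in_map_iff in Hx as [[i j] [<- Hij]].
  apply in_prod_iff in Hij as [Hi Hj]. apply in_seq in Hi, Hj.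
  apply hex_point_spec; cbn [fst snd]; lia.
Qed.

Lemma hexagon_anticode r : 1 <= r -> finite_anticode 2 (hexagon r) (2 * r - 1).
Proof.
  intros Hr. split; [|split].
  - apply NoDup_map_NoDup_ForallPairs; [|apply NoDup_list_prod; apply seq_NoDup].
    intros [i j] [i' j'] Hij Hij' E.
    apply in_prod_iff in Hij as [Hi Hj], Hij' as [Hi' Hj']. apply in_seq in Hi, Hj, Hi', Hj'.
    unfold hex_point in E; cbn [fst snd] in E.
    destruct (Z.ltb_spec (Z.of_nat j) (r + 1 + Z.of_nat i));
    destruct (Z.ltb_spec (Z.of_nat j') (r + 1 + Z.of_nat i'));
    injection E; intros; f_equal; lia.
  - intros x Hx. apply in_hexagon in Hx as [p1 [p2 [-> _]]]. reflexivity.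
  - intros x y Hx Hy.
    apply in_hexagon in Hx as [p1 [p2 [-> Hp]]], Hy as [q1 [q2 [-> Hq]]].
    unfold da; cbn [pos_sum]. lia.
Qed.

Lemma length_hexagon r : 1 <= r -> INR (length (hexagon r)) = (IZR r * IZR (3 * r))%R.
Proof.
  intros Hr. unfold hexagon.
  rewrite length_map, length_prod, !length_seq, mult_INR, !INR_IZR_INZ, !Z2Nat.id by lia.
  reflexivity.
Qed.

Lemma diameter_perfect_hex_code r : 1 <= r -> diameter_perfect 2 (hex_code r) (2 * r).
Proof.
  intros Hr. split; [|split].
  - apply is_code_cong_lift, is_code_cong_lift, is_code_full.
  - apply min_dist_hex_code, Hr.
  - exists (1 / IZR r / IZR (3 * r))%R. split.
    + apply has_density_cong_lift; [lia|].
      apply has_density_cong_lift; [lia | apply has_density_full].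
    + exists (hexagon r). split.
      * apply hexagon_anticode, Hr.
      * rewrite length_hexagon by exact Hr. field. split; apply not_0_IZR; lia.
Qed.

Lemma pos_sum_nonneg x y : 0 <= pos_sum x y.
Proof. revert y; induction x; intros [|b y]; simpl; try lia. specialize (IHx y); lia. Qed.

Lemma pos_sum_antisym x y : length x = length y ->
  pos_sum x y = 0 -> pos_sum y x = 0 -> x = y.
Proof.
  revert y; induction x as [|a x IH]; intros [|b y] Hl; try discriminate; simpl; auto.
  intros Hxy Hyx. pose proof (pos_sum_nonneg x y). pose proof (pos_sum_nonneg y x).
  f_equal; [lia | apply IH; simpl in Hl; lia].
Qed.

Fixpoint wsum (w : Z) (x : list Z) : Z :=
  match x with [] => 0 | a :: x' => w * a + wsum (w + 1) x' end.

Lemma wsum_sub_bounds x y w : length x = length y -> 0 <= w ->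
  w * pos_sum x y - (w + Z.of_nat (length x) - 1) * pos_sum y x
  <= wsum w x - wsum w y <=
  (w + Z.of_nat (length x) - 1) * pos_sum x y - w * pos_sum y x.
Proof.
  revert y w; induction x as [|a x IH]; intros [|b y] w Hl Hw; try discriminate.
  { simpl; lia. }
  simpl in *. injection Hl as Hl. specialize (IH y (w + 1) Hl ltac:(lia)). simpl in IH.
  pose proof (pos_sum_nonneg x y). pose proof (pos_sum_nonneg y x).
  rewrite Zpos_P_of_succ_nat.
  set (P := pos_sum x y) in *. set (Q := pos_sum y x) in *.
  set (n := Z.of_nat (length x)) in *.
  assert (0 <= n) by lia.
  destruct (Z.le_ge_cases a b); [rewrite (Z.max_r (a - b)), (Z.max_l (b - a)) by lia
                                | rewrite (Z.max_l (a - b)), (Z.max_r (b - a)) by lia]; nia.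
Qed.

(* Distinct weights make a transposition e_i - e_j visible in the weighted sum. *)
Lemma wsum_neq_of_pos_sum_1 x y w : length x = length y -> 0 <= w ->
  pos_sum x y = 1 -> pos_sum y x = 1 -> wsum w x <> wsum w y.
Proof.
  revert y w; induction x as [|a x IH]; intros [|b y] w Hl Hw; try discriminate.
  simpl in *. injection Hl as Hl. intros HP HQ.
  pose proof (pos_sum_nonneg x y). pose proof (pos_sum_nonneg y x).
  pose proof (wsum_sub_bounds x y (w + 1) Hl ltac:(lia)) as Hb. simpl in Hb.
  destruct (Z.eq_dec a b) as [<-|Hab].
  - rewrite Z.sub_diag, Z.max_id in HP, HQ.
    specialize (IH y (w + 1) Hl ltac:(lia) ltac:(lia) ltac:(lia)). lia.
  - destruct (Z.le_ge_cases a b); nia.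
Qed.

Lemma wsum_zeros_app j w l : wsum w (repeat 0 j ++ l) = wsum (w + Z.of_nat j) l.
Proof.
  revert w; induction j as [|j IH]; intros w; cbn [repeat app wsum].
  - f_equal; lia.
  - rewrite IH, Z.mul_0_r, Z.add_0_l. f_equal. lia.
Qed.

Lemma pos_sum_zeros_app j l l' : pos_sum (repeat 0 j ++ l) (repeat 0 j ++ l') = pos_sum l l'.
Proof. induction j; simpl; auto. Qed.

(* Codewords z :: t satisfy z + 2 t_1 + 3 t_2 + ... + (n + 1) t_n = 0 mod (n + 2). *)
Definition weighted_code (n : nat) : list Z -> Prop :=
  cong_lift (Z.of_nat n + 2) (fun t => - wsum 2 t) (full n).

Lemma weighted_code_spec n x : weighted_code n x ->
  length x = S n /\ exists q, wsum 1 x = q * (Z.of_nat n + 2).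
Proof.
  destruct x as [|z t]; [contradiction|]. intros Hx.
  apply cong_lift_mod in Hx as [Ht [q Hq]]; [|lia]. apply full_iff in Ht.
  split; [simpl; lia|]. exists q. change (wsum 1 (z :: t)) with (1 * z + wsum 2 t). lia.
Qed.

Lemma min_dist_weighted_code n : (1 <= n)%nat -> min_dist (weighted_code n) 2.
Proof.
  intros Hn. split.
  - destruct n as [|j]; [lia|].
    exists (1 :: repeat 0 j ++ [1]), (0 :: repeat 0 j ++ [0]). split; [|split; [|split]].
    + split.
      * apply full_iff. rewrite length_app, repeat_length. simpl. lia.
      * assert (E : 1 - - wsum 2 (repeat 0 j ++ [1]) = Z.of_nat (S j) + 2)
          by (rewrite wsum_zeros_app; cbn [wsum]; lia).
        rewrite E. apply Z.mod_same. lia.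
    + split.
      * apply full_iff. rewrite length_app, repeat_length. simpl. lia.
      * rewrite wsum_zeros_app. cbn [wsum]. rewrite Z.mul_0_r. reflexivity.
    + discriminate.
    + unfold da. cbn [pos_sum]. rewrite !pos_sum_zeros_app. cbn [pos_sum]. lia.
  - intros x y Hx Hy Hxy.
    apply weighted_code_spec in Hx as [Hlx [q Hq]], Hy as [Hly [q' Hq']].
    assert (Hl : length x = length y) by congruence.
    destruct (Z_lt_le_dec (da x y) 2) as [Hlt|]; [exfalso|assumption].
    unfold da in Hlt.
    pose proof (pos_sum_nonneg x y). pose proof (pos_sum_nonneg y x).
    pose proof (wsum_sub_bounds x y 1 Hl ltac:(lia)) as Hb. rewrite Hlx in Hb.
    (* |wsum 1 x - wsum 1 y| <= n + 1 forces the multiple of n + 2 to vanish. *)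
    assert (Hq0 : q = q') by nia.
    subst q'.
    assert (Hw : wsum 1 x = wsum 1 y) by lia.
    destruct (Z.eq_dec (pos_sum x y) 0) as [HP|HP], (Z.eq_dec (pos_sum y x) 0) as [HQ|HQ].
    + exact (Hxy (pos_sum_antisym x y Hl HP HQ)).
    + nia.
    + nia.
    + exact (wsum_neq_of_pos_sum_1 x y 1 Hl ltac:(lia) ltac:(lia) ltac:(lia) Hw).
Qed.

Definition zsum (x : list Z) : Z := fold_right Z.add 0 x.

Lemma zsum_app x y : zsum (x ++ y) = zsum x + zsum y.
Proof. induction x; simpl; lia. Qed.

Lemma zsum_zeros n : zsum (repeat 0 n) = 0.
Proof. induction n; simpl; lia. Qed.

Lemma pos_sum_le_zsum x y : Forall (Z.le 0) x -> Forall (Z.le 0) y -> pos_sum x y <= zsum x.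
Proof.
  intros Hx. revert y. induction Hx as [|a x Ha Hx IH]; intros [|b y] Hy; simpl; try lia.
  - assert (0 <= zsum x) by (clear IH; induction Hx; simpl; lia). lia.
  - inversion Hy as [|? ? Hb Hy']. specialize (IH y Hy'). lia.
Qed.

Definition unit_vec (i j : nat) : list Z := repeat 0 i ++ 1 :: repeat 0 j.

Lemma unit_vec_inj i j i' j' : unit_vec i j = unit_vec i' j' -> i = i'.
Proof.
  revert i'; induction i as [|i IH]; intros [|i'] E; try discriminate; auto.
  injection E as E. f_equal. exact (IH i' E).
Qed.

Lemma Forall_nonneg_zeros n : Forall (Z.le 0) (repeat 0 n).
Proof. apply Forall_forall. intros x Hx. apply repeat_spec in Hx. lia. Qed.

Definition unit_ball (m : nat) : list (list Z) :=
  repeat 0 m :: map (fun i => unit_vec i (m - 1 - i)) (seq 0 m).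

Lemma in_unit_ball m x : In x (unit_ball m) ->
  length x = m /\ Forall (Z.le 0) x /\ zsum x <= 1.
Proof.
  intros [<-|Hx].
  - split; [apply repeat_length|]. split; [apply Forall_nonneg_zeros|]. rewrite zsum_zeros. lia.
  - apply in_map_iff in Hx as [i [<- Hi]]. apply in_seq in Hi. unfold unit_vec.
    split; [|split].
    + rewrite length_app, repeat_length. cbn [length]. rewrite repeat_length. lia.
    + apply Forall_app. split; [apply Forall_nonneg_zeros|].
      constructor; [lia | apply Forall_nonneg_zeros].
    + rewrite zsum_app. change (zsum (1 :: ?l)) with (1 + zsum l).
      rewrite !zsum_zeros. lia.
Qed.

Lemma unit_ball_anticode m : finite_anticode m (unit_ball m) 1.
Proof.
  split; [|split].
  - constructor.
    + intros Hin. apply in_map_iff in Hin as [i [E _]].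
      assert (Hone : In 1 (repeat 0 m)) by (rewrite <- E; apply in_or_app; right; left; reflexivity).
      apply repeat_spec in Hone. discriminate.
    + apply NoDup_map_NoDup_ForallPairs; [|apply seq_NoDup].
      intros i i' _ _ E. exact (unit_vec_inj _ _ _ _ E).
  - intros x Hx. apply in_unit_ball in Hx. apply Hx.
  - intros x y Hx Hy.
    apply in_unit_ball in Hx as [_ [Hx Hsx]], Hy as [_ [Hy Hsy]].
    pose proof (pos_sum_le_zsum x y Hx Hy). pose proof (pos_sum_le_zsum y x Hy Hx).
    unfold da. lia.
Qed.

Lemma diameter_perfect_weighted_code n : (1 <= n)%nat ->
  diameter_perfect (S n) (weighted_code n) 2.
Proof.
  intros Hn. split; [|split].
  - apply is_code_cong_lift, is_code_full.
  - apply min_dist_weighted_code, Hn.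
  - exists (1 / IZR (Z.of_nat n + 2))%R. split.
    + apply has_density_cong_lift; [lia | apply has_density_full].
    + exists (unit_ball (S n)). split.
      * apply unit_ball_anticode.
      * unfold unit_ball. cbn [length]. rewrite length_map, length_seq, INR_IZR_INZ.
        replace (Z.of_nat (S (S n))) with (Z.of_nat n + 2) by lia.
        field. apply not_0_IZR. lia.
Qed.

Theorem mainTheorem12 (m : nat) (r : Z) :
  (((m = 1%nat \/ m = 2%nat) /\ 1 <= r) \/ ((3 <= m)%nat /\ r = 1)) ->
  exists C : list Z -> Prop, diameter_perfect m C (2 * r).
Proof.
  intros [[[-> | ->] Hr] | [Hm ->]].
  - exists (multiples_code (2 * r)). apply diameter_perfect_multiples_code. lia.
  - exists (hex_code r). apply diameter_perfect_hex_code, Hr.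
  - destruct m as [|n]; [lia|].
    exists (weighted_code n). apply diameter_perfect_weighted_code. lia.
Qed.
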